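(* Let $\mathcal{A}$ be a pOC with state set $Q$ and let $p,q\in Q$ be such that $[p{\downarrow}q]>0$ and $\mathrm{Pre}^*(q(0))\cap\mathrm{Post}^*(p(1))$ is finite. Then $$E(p{\downarrow}q)\le\frac{15|Q|^3}{x_{\min}^{4|Q|^3}}.$$
   Context: A pOC is $\mathcal{A}=(Q,\delta^{=0},\delta^{>0},P^{=0},P^{>0})$ with the following components. - $\delta^{>0}\subseteq Q\times\{-1,0,1\}\times Q$ are the positive rules and $\delta^{=0}\subseteq Q\times\{0,1\}\times Q$ are the zero rules. Every state has both kinds of outgoing rule. - $P^{>0}$ and $P^{=0}$ are positive rational probability distributions over the outgoing rules of each state. $\mathcal{M}_\mathcal{A}$ is the Markov chain on configurations $p(i)$ with the following transitions: - $p(0)\to q(c)$ with probability $P^{=0}(p,c,q)$; - for $i\ge1$, $p(i)\to q(i+c)$ with probability $P^{>0}(p,c,q)$. $\mathrm{Pre}^*(C)$ and $\mathrm{Post}^*(C)$ are the sets of configurations from which $C$ is reachable, respectively which are reachable from $C$. $\mathrm{Run}(p{\downarrow}q)$ is the set of runs from $p(1)$ that visit $q(0)$ with the counter positive before that visit. $[p{\downarrow}q]$ is its probability, and $E(p{\downarrow}q)$ is the conditional expected number of transitions until the first visit of $q(0)$ given $\mathrm{Run}(p{\downarrow}q)$. $x_{\min}$ is the least positive probability used in the rules of $\mathcal{A}$. *)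

From HB Require Import structures.
From mathcomp Require Import all_boot all_order all_algebra.
From mathcomp Require Import all_classical all_reals all_analysis.
Set Implicit Arguments. Unset Strict Implicit. Unset Printing Implicit Defensive.
Import Order.TTheory GRing.Theory Num.Theory.
Local Open Scope ring_scope.

(* A pOC over the finite state set Q is given by two probability-weight
   functions:
   - Pz p c q = P^{=0}(p, c, q) for the zero rule (p, c, q), c : 'I_2 meaning
     counter change c in {0,1};
   - Pp p c q = P^{>0}(p, c - 1, q) for the positive rule (p, c-1, q),
     c : 'I_3 meaning counter change c - 1 in {-1,0,1}.
   The rules delta^{=0}, delta^{>0} are the supports (weights > 0). *)
Definition is_pOC (R : realType) (Q : finType)
  (Pz : Q -> 'I_2 -> Q -> R) (Pp : Q -> 'I_3 -> Q -> R) : Prop :=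
  (forall p c q, 0 <= Pz p c q) /\
  (forall p c q, 0 <= Pp p c q) /\
  (forall p, \sum_(c : 'I_2) \sum_(q : Q) Pz p c q = 1) /\
  (forall p, \sum_(c : 'I_3) \sum_(q : Q) Pp p c q = 1) /\
  (forall p c q, exists r : rat, Pz p c q = ratr r) /\
  (forall p c q, exists r : rat, Pp p c q = ratr r).

Section POC.
Variables (R : realType) (Q : finType).
Variables (Pz : Q -> 'I_2 -> Q -> R) (Pp : Q -> 'I_3 -> Q -> R).

Definition trans (x y : Q * nat) : R :=
  match x, y with
  | (p, i), (q, j) =>
    if i == 0%N then \sum_(c : 'I_2 | j == nat_of_ord c) Pz p c q
    else \sum_(c : 'I_3 | j == (i + c - 1)%N) Pp p c q
  end.

Inductive reach : Q * nat -> Q * nat -> Prop :=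
| reach_refl x : reach x x
| reach_step x y z : 0 < trans x y -> reach y z -> reach x z.

Definition Pre (C : set (Q * nat)) : set (Q * nat) :=
  [set x | exists2 y, C y & reach x y].
Definition Post (C : set (Q * nat)) : set (Q * nat) :=
  [set y | exists2 x, C x & reach x y].

Definition cfg n (x : Q * 'I_n) : Q * nat := (x.1, nat_of_ord x.2).

(* Probability that a run from p(1) visits q(0) for the first time at step n
   with the counter positive at all earlier steps: sum over all paths of
   length n (counters are at most n+1 after n steps from p(1)) of the
   product of the transition probabilities. *)
Definition hitn (p q : Q) (n : nat) : R :=
  \sum_(w : {ffun 'I_n.+1 -> Q * 'I_n.+2} |
          [&& ((w ord0).1 == p) && (nat_of_ord (w ord0).2 == 1%N),
              ((w ord_max).1 == q) && (nat_of_ord (w ord_max).2 == 0%N) &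
              [forall i : 'I_n.+1, (i < n)%N ==> (0 < (w i).2)%N]])
    \prod_(i < n) trans (cfg (w (inord i))) (cfg (w (inord i.+1))).

Definition hitprob (p q : Q) : \bar R := (\sum_(n <oo) (hitn p q n)%:E)%E.

Definition condE (p q : Q) : \bar R :=
  (\sum_(n <oo) ((n%:R * hitn p q n) / fine (hitprob p q))%:E)%E.

Definition xmin : R :=
  Num.min (\big[Num.min/1]_(t : Q * 'I_2 * Q | 0 < Pz t.1.1 t.1.2 t.2)
              Pz t.1.1 t.1.2 t.2)
          (\big[Num.min/1]_(t : Q * 'I_3 * Q | 0 < Pp t.1.1 t.1.2 t.2)
              Pp t.1.1 t.1.2 t.2).

End POC.

From Pilot Require Import Defs.
From HB Require Import structures.
From mathcomp Require Import all_boot all_order all_algebra.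
From mathcomp Require Import all_classical all_reals all_analysis.
From mathcomp Require Import zify ring lra.
Set Implicit Arguments. Unset Strict Implicit. Unset Printing Implicit Defensive.
Import Order.TTheory GRing.Theory Num.Theory.
Local Open Scope ring_scope.

(* Call a configuration good if it is reachable from p(1), has a positive
   counter, and can reach q(0) without the counter hitting zero.  A pumping
   argument bounds the counter of good configurations by |Q|: a run that
   climbs above |Q| and comes back down to zero repeats a state on the way up
   and on the way down, and repeating both cycles equally often would produce
   configurations of unbounded counter in the finite set
   Pre*(q(0)) ∩ Post*(p(1)).  So every good configuration has a path to q(0)
   of length below L = |Q|(|Q|+1), and q(0) is hit within L steps with
   probability at least x_min^L.  The probability of staying among good
   configurations thus shrinks by the factor 1 - x_min^L every L steps, which
   bounds the expected hitting time by L / x_min^L; dividing by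
   [p↓q] >= x_min^L gives L / x_min^(2L) <= 15|Q|^3 / x_min^(4|Q|^3). *)

Arguments Defs.trans : simpl never.

Section FfunCons.
Variables (R : nmodType) (T : finType).

Definition ffun_cons n (t : T) (w : {ffun 'I_n.+1 -> T}) : {ffun 'I_n.+2 -> T} :=
  [ffun i : 'I_n.+2 => if (i : nat) == 0%N then t else w (inord i.-1)].

Lemma ffun_cons0 n t (w : {ffun 'I_n.+1 -> T}) : ffun_cons t w ord0 = t.
Proof. by rewrite ffunE. Qed.

Lemma ffun_cons_lift n t (w : {ffun 'I_n.+1 -> T}) j :
  ffun_cons t w (lift ord0 j) = w j.
Proof. by rewrite ffunE lift0 /= inord_val. Qed.

Lemma ffun_cons_inord n t (w : {ffun 'I_n.+1 -> T}) k : (k <= n)%N ->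
  ffun_cons t w (inord k.+1) = w (inord k).
Proof. by move=> hk; rewrite ffunE inordK. Qed.

Lemma ffun_cons_max n t (w : {ffun 'I_n.+1 -> T}) : ffun_cons t w ord_max = w ord_max.
Proof. by rewrite ffunE /=; congr (w _); apply: val_inj; rewrite /= inordK. Qed.

Lemma big_ffun_cons n (F : {ffun 'I_n.+2 -> T} -> R) :
  \sum_w F w = \sum_(t : T) \sum_(w : {ffun 'I_n.+1 -> T}) F (ffun_cons t w).
Proof.
rewrite pair_big /= (reindex (fun tw : T * {ffun 'I_n.+1 -> T} => ffun_cons tw.1 tw.2)) //.
exists (fun w : {ffun 'I_n.+2 -> T} => (w ord0, [ffun j : 'I_n.+1 => w (lift ord0 j)])).
  move=> [t w] _ /=; congr pair; first exact: ffun_cons0.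
  by apply/ffunP => j; rewrite ffunE ffun_cons_lift.
move=> w _; apply/ffunP => i; case: (unliftP ord0 i) => [j ->|->].
  by rewrite ffun_cons_lift ffunE.
by rewrite ffun_cons0.
Qed.

Lemma big_ffun1 (F : {ffun 'I_1 -> T} -> R) :
  \sum_w F w = \sum_(t : T) F [ffun _ => t].
Proof.
rewrite (reindex (fun t : T => [ffun _ : 'I_1 => t])) //.
exists (fun w : {ffun 'I_1 -> T} => w ord0); first by move=> t _; rewrite ffunE.
by move=> w _; apply/ffunP => i; rewrite ffunE (ord1 i).
Qed.

End FfunCons.

Lemma sumr_gt0_exists (R : realDomainType) (I : finType) (P : pred I) (F : I -> R) :
  0 < \sum_(i | P i) F i -> exists i, P i /\ 0 < F i.
Proof.
move=> hF; case: (pselect (exists i, P i /\ 0 < F i)) => // hneg; exfalso.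
have : \sum_(i | P i) F i <= 0.
  by apply: sumr_le0 => i Pi; rewrite leNgt; apply/negP => Fi; apply: hneg; exists i.
by rewrite leNgt hF.
Qed.

Lemma sumr_ord_widen_le (R : numDomainType) (F : nat -> R) M N : (M <= N)%N ->
  (forall k, 0 <= F k) -> \sum_(k < M) F k <= \sum_(k < N) F k.
Proof.
move=> hMN hF; rewrite (big_ord_widen N F hMN) big_mkcond /=.
by apply: ler_sum => i _; case: ifP.
Qed.

Lemma sum_gt_le_shift (R : numDomainType) (h : nat -> R) k M : (forall m, 0 <= h m) ->
  \sum_(m < M | (k < m)%N) h m <= \sum_(m < M) h (m + k.+1)%N.
Proof.
move=> h0; rewrite (eq_bigl (fun i : 'I_M => xpredT i && (k.+1 <= i)%N)) //.
rewrite -(@big_geq_mkord _ _ _ k.+1 M xpredT h).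
rewrite -{1}[k.+1]add0n big_addn -(big_mkord xpredT (fun m => h (m + k.+1)%N)).
rewrite (big_nat_widen _ _ _ _ _ (leq_subr k.+1 M)) big_mkcond /=.
by apply: ler_sum => i _; case: ifP.
Qed.

Lemma sum_mul_le_tails (R : numDomainType) (h : nat -> R) M : (forall m, 0 <= h m) ->
  \sum_(m < M) m%:R * h m <= \sum_(k < M) \sum_(m < M) h (m + k.+1)%N.
Proof.
move=> h0.
have E (m : 'I_M) : m%:R * h m = \sum_(k < M) if (k < m)%N then h m else 0.
  rewrite -big_mkcond mulr_natl -(big_ord_widen M (fun _ => h m) (ltnW (ltn_ord m))).
  by rewrite sumr_const card_ord.
rewrite (eq_bigr _ (fun m _ => E m)) exchange_big /=.
by apply: ler_sum => k _; rewrite -big_mkcond; exact: sum_gt_le_shift.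
Qed.

Lemma uniq_size_le_box (T : finType) N (s : seq (T * nat)) :
  uniq s -> all (fun z => (z.2 <= N)%N) s -> (size s <= #|T| * N.+1)%N.
Proof.
move=> hu hs.
have -> : (#|T| * N.+1)%N = size [seq (a, i) | a <- enum T, i <- iota 0 N.+1].
  by rewrite size_allpairs size_iota -cardE.
apply: uniq_leq_size hu _ => -[a i] hz; apply/allpairsP; exists (a, i).
by rewrite mem_enum mem_iota add0n ltnS (allP hs _ hz).
Qed.

Lemma nneseries_le_bound (R : realType) (u : nat -> R) (B : R) :
  (forall n, 0 <= u n) -> (forall k, \sum_(i < k) u i <= B) ->
  (\sum_(n <oo) (u n)%:E <= B%:E)%E.
Proof.
move=> u0 hB; apply: lime_le; first by apply: is_cvg_nneseries => n _ _; rewrite lee_fin.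
by apply: nearW => k; rewrite sumEFin lee_fin big_mkord.
Qed.

Section Chain.
Variables (R : realType) (Q : finType).
Variables (Pz : Q -> 'I_2 -> Q -> R) (Pp : Q -> 'I_3 -> Q -> R) (p q : Q).
Hypothesis Pp_ge0 : forall s c r, 0 <= Pp s c r.
Hypothesis Pp_sum1 : forall s, \sum_(c : 'I_3) \sum_(r : Q) Pp s c r = 1.
Local Notation trans := (trans Pz Pp).
Local Notation reach := (reach Pz Pp).
Local Notation q0 := (q, 0%N).
Local Notation p1 := (p, 1%N).

Lemma trans_pos s i t j : (0 < i)%N ->
  trans (s, i) (t, j) = \sum_(c : 'I_3 | j == (i + c - 1)%N) Pp s c t.
Proof. by move=> hi; rewrite /Defs.trans (gtn_eqF hi). Qed.

Lemma trans_shift s i t j d : (0 < i)%N ->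
  trans (s, i + d) (t, j + d) = trans (s, i) (t, j).
Proof.
move=> hi; rewrite !trans_pos //; last by lia.
by apply: eq_bigl => c; apply/eqP/eqP; lia.
Qed.

Lemma trans_jump_up x y : (x.2.+1 < y.2)%N -> trans x y = 0.
Proof.
case: x y => s i [t j] /= h; rewrite /Defs.trans.
by case: ifP => _; apply: big_pred0 => c; apply/negbTE/eqP; have := ltn_ord c; lia.
Qed.

Lemma trans_jump_down x y : (y.2.+1 < x.2)%N -> trans x y = 0.
Proof.
case: x y => s i [t j] /= h; rewrite /Defs.trans.
case: ifP => /eqP hi; first lia.
by apply: big_pred0 => c; apply/negbTE/eqP; have := ltn_ord c; lia.
Qed.

Lemma trans_gt0_counter x y : 0 < trans x y -> (y.2 <= x.2.+1)%N /\ (x.2 <= y.2.+1)%N.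
Proof.
move=> h; split; rewrite leqNgt; apply/negP => h'; move: h.
  by rewrite trans_jump_up // ltxx.
by rewrite trans_jump_down // ltxx.
Qed.

Lemma trans_gt0_Pp x c r : (0 < x.2)%N -> 0 < Pp x.1 c r ->
  0 < trans x (r, (x.2 + c - 1)%N).
Proof.
case: x => s i /= hi hP; rewrite trans_pos // (bigD1 c) //=.
by apply: (lt_le_trans hP); rewrite lerDl sumr_ge0.
Qed.

Lemma trans_gt0_Pp_exists s i y : (0 < i)%N -> 0 < trans (s, i) y ->
  exists c : 'I_3, y.2 = (i + c - 1)%N /\ 0 < Pp s c y.1.
Proof.
case: y => t j hi; rewrite trans_pos // => /sumr_gt0_exists [c [/eqP hc hP]].
by exists c.
Qed.

Definition step_mean (f : Q * nat -> R) (x : Q * nat) : R :=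
  \sum_(c : 'I_3) \sum_(r : Q) Pp x.1 c r * f (r, (x.2 + c - 1)%N).

(* [hitn] computed by first-step analysis, from an arbitrary configuration. *)
Fixpoint firsthit (n : nat) (x : Q * nat) : R :=
  if n is n'.+1 then (if (0 < x.2)%N then step_mean (firsthit n') x else 0)
  else (x == q0)%:R.

Definition path_sum n K (x : Q * nat) : R :=
  \sum_(w : {ffun 'I_n.+1 -> Q * 'I_K} | [&& cfg (w ord0) == x, cfg (w ord_max) == q0 &
       [forall i : 'I_n.+1, (i < n)%N ==> (0 < (w i).2)%N]])
    \prod_(i < n) trans (cfg (w (inord i))) (cfg (w (inord i.+1))).

Lemma cfg_eq K (a b : Q * 'I_K) : (cfg a == cfg b) = (a == b).
Proof. by case: a b => a1 a2 [b1 b2]; rewrite /cfg /= !xpair_eqE val_eqE. Qed.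

Lemma sum_trans_pos x (f : Q * nat -> R) K : (0 < x.2)%N -> (x.2.+1 < K)%N ->
  \sum_(y : Q * 'I_K) trans x (cfg y) * f (cfg y) = step_mean f x.
Proof.
case: x => s i /= hi hK; rewrite /step_mean /=.
transitivity (\sum_(r : Q) \sum_(j : 'I_K) trans (s, i) (r, val j) * f (r, val j)).
  by rewrite pair_bigA.
rewrite [RHS]exchange_big; apply: eq_bigr => r _.
under [LHS]eq_bigr => j _ do rewrite trans_pos // mulr_suml big_mkcond /=.
rewrite exchange_big; apply: eq_bigr => c _ /=.
have hc : (i + c - 1 < K)%N by have := ltn_ord c; lia.
by rewrite -big_mkcond (big_pred1 (Ordinal hc)) // => j; rewrite eq_sym -val_eqE.
Qed.

Lemma forall_ffun_cons K n (t : Q * 'I_K) (w : {ffun 'I_n.+1 -> Q * 'I_K}) :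
  [forall i : 'I_n.+2, (i < n.+1)%N ==> (0 < (ffun_cons t w i).2)%N] =
  (0 < t.2)%N && [forall j : 'I_n.+1, (j < n)%N ==> (0 < (w j).2)%N].
Proof.
apply/forallP/andP => [H|[t_pos /forallP H] i].
  split; first by have := H ord0; rewrite ffun_cons0.
  by apply/forallP => j; have := H (lift ord0 j); rewrite ffun_cons_lift lift0.
case: (unliftP ord0 i) => [j ->|->]; last by rewrite ffun_cons0 t_pos implybT.
by rewrite ffun_cons_lift lift0 ltnS; exact: H.
Qed.

Lemma prod_ffun_cons K n (t : Q * 'I_K) (w : {ffun 'I_n.+1 -> Q * 'I_K}) :
  \prod_(i < n.+1) trans (cfg (ffun_cons t w (inord i))) (cfg (ffun_cons t w (inord i.+1))) =
  trans (cfg t) (cfg (w ord0)) *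
  \prod_(i < n) trans (cfg (w (inord i))) (cfg (w (inord i.+1))).
Proof.
have inord0 m : (inord 0 : 'I_m.+1) = ord0 by apply: val_inj; rewrite /= inordK.
rewrite big_ord_recl inord0 ffun_cons0 ffun_cons_inord // inord0; congr (_ * _).
by apply: eq_bigr => i _; rewrite lift0 !ffun_cons_inord //; have := ltn_ord i; lia.
Qed.

Lemma path_sumS n K x : (x.2 < K)%N ->
  path_sum n.+1 K x =
  if (0 < x.2)%N then \sum_(y : Q * 'I_K) trans x (cfg y) * path_sum n K (cfg y) else 0.
Proof.
case: x => s i /= hx; rewrite /path_sum big_mkcond big_ffun_cons.
under [LHS]eq_bigr => t _ do under eq_bigr => w _ do
  rewrite ffun_cons0 ffun_cons_max forall_ffun_cons prod_ffun_cons.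
pose t0 : Q * 'I_K := (s, Ordinal hx).
have cfg_t0 t : (cfg t == (s, i)) = (t == t0) by rewrite -cfg_eq.
rewrite (bigD1 t0) //= [X in _ + X]big1 ?addr0; last first.
  by move=> t ht; apply: big1 => w _; rewrite cfg_t0 (negbTE ht).
rewrite cfg_t0 eqxx /=; case: (ltnP 0 i) => hi /=; last first.
  by apply: big1 => w _; rewrite andbF.
under [RHS]eq_bigr do rewrite mulr_sumr big_mkcond.
rewrite exchange_big; apply: eq_bigr => w _ /=; case: ifP => hw; last first.
  by rewrite big1 // => y _; rewrite andbF.
rewrite (bigD1 (w ord0)) //= [X in _ + X]big1 ?addr0 ?eqxx // => y hy.
by rewrite cfg_eq eq_sym (negbTE hy).
Qed.

Lemma path_sum_firsthit n K x : (x.2 + n < K)%N -> path_sum n K x = firsthit n x.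
Proof.
elim: n x => [|n IH] x hK.
  rewrite /path_sum big_mkcond big_ffun1 /=.
  have -> : [forall i : 'I_1, true] = true by apply/forallP.
  under eq_bigr => t _ do rewrite !ffunE big_ord0 andbT.
  have hq : (0 < K)%N by lia.
  rewrite (bigD1 (q, Ordinal hq)) //= [X in _ + X]big1 ?addr0 => [|t ht].
  - by rewrite /cfg /= eqxx andbT eq_sym; case: (x == q0).
  - have -> : (cfg t == q0) = (t == (q, Ordinal hq)) by rewrite -cfg_eq.
    by rewrite (negbTE ht) andbF.
rewrite path_sumS /=; last by lia.
case: ifP => hi //; rewrite -(@sum_trans_pos x (firsthit n) K) //; last by lia.
apply: eq_bigr => y _; case: (ltnP x.2.+1 (cfg y).2) => hy.
  by rewrite trans_jump_up // !mul0r.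
by rewrite IH //; lia.
Qed.

Lemma hitn_firsthit n : hitn Pz Pp p q n = firsthit n p1.
Proof.
rewrite -(@path_sum_firsthit n n.+2) /=; last by lia.
by apply: eq_bigl => w; rewrite /cfg !xpair_eqE.
Qed.

Inductive reach_above (m : nat) : Q * nat -> Q * nat -> Prop :=
| reach_above_refl x : reach_above m x x
| reach_above_step x y z :
    (m <= x.2)%N -> 0 < trans x y -> reach_above m y z -> reach_above m x z.

Lemma reach_above_trans m x y z :
  reach_above m x y -> reach_above m y z -> reach_above m x z.
Proof.
elim=> {x y} [//|x y y' hx hxy _ IH] hz.
exact: reach_above_step hx hxy (IH hz).
Qed.

Lemma reach_above_weaken m m' x y : (m' <= m)%N -> reach_above m x y -> reach_above m' x y.
Proof.
move=> hm; elim=> {x y} [x|x y z hx hxy _ IH]; first exact: reach_above_refl.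
exact: reach_above_step (leq_trans hm hx) hxy IH.
Qed.

Lemma reach_aboveW m x y : reach_above m x y -> reach x y.
Proof.
elim=> {x y} [x|x y z _ hxy _ IH]; first exact: reach_refl.
exact: reach_step hxy IH.
Qed.

Lemma reach_above0 x y : reach x y -> reach_above 0 x y.
Proof.
elim=> {x y} [x|x y z hxy _ IH]; first exact: reach_above_refl.
exact: reach_above_step hxy IH.
Qed.

Lemma reach_above_shift m d x z : (0 < m)%N -> reach_above m x z ->
  reach_above (m + d) (x.1, x.2 + d) (z.1, z.2 + d).
Proof.
move=> hm; elim=> {x z} [x|[s i] [t j] z hx hxy _ IH]; first exact: reach_above_refl.
apply: reach_above_step IH; first by rewrite /= leq_add2r.
by rewrite trans_shift //; apply: leq_trans hx.
Qed.

Lemma reach_above_start m x z : reach_above m x z -> (m <= z.2)%N -> (m <= x.2)%N.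
Proof. by case. Qed.

Lemma reach_above_last_visit a b y z : reach_above a y z -> (a <= b <= z.2)%N ->
  reach_above b y z \/ exists t, reach_above a y (t, b) /\ reach_above b (t, b) z.
Proof.
move=> hp /andP[hab hbz]; elim: hp hbz => {y z} [y|y y' z hy hyy' _ IH] hbz.
  by left; exact: reach_above_refl.
case: (IH hbz) => [Hb|[t [h1 h2]]]; last first.
  by right; exists t; split => //; exact: reach_above_step hy hyy' h1.
case: (leqP b y.2) => hyb; first by left; exact: reach_above_step hyb hyy' Hb.
have hb' := reach_above_start Hb hbz.
have [hd _] := trans_gt0_counter hyy'.
have ey' : y' = (y'.1, b) by rewrite [LHS]surjective_pairing; congr pair; lia.
right; exists y'.1; rewrite -ey'; split=> //.
exact: reach_above_step hy hyy' (reach_above_refl _ _).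
Qed.

Lemma reach_above_first_visit b y z : reach_above 1 y z -> (z.2 <= b <= y.2)%N ->
  exists t, reach_above b y (t, b) /\ reach_above 1 (t, b) z.
Proof.
move=> hp /andP[hz hb]; elim: hp hz hb => {y z} [y|y y' z hy hyy' hp IH] hz hb.
  have -> : y = (y.1, b) by rewrite [LHS]surjective_pairing; congr pair; lia.
  by exists y.1; split; exact: reach_above_refl.
case: (leqP b y'.2) => hb'.
  have [t [h1 h2]] := IH hz hb'.
  by exists t; split => //; exact: reach_above_step hb hyy' h1.
have [_ hd] := trans_gt0_counter hyy'.
have ey : y = (y.1, b) by rewrite [LHS]surjective_pairing; congr pair; lia.
exists y.1; rewrite -ey; split; first exact: reach_above_refl.
exact: reach_above_step hy hyy' hp.
Qed.

Lemma ascending_ladder t r k : reach_above 1 (t, 1%N) (r, k) ->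
  forall j, (1 <= j <= k)%N -> exists f : nat -> Q, [/\ f 1%N = t,
    forall l, (1 <= l <= j)%N -> reach_above l (f l, l) (r, k) &
    forall l l', (1 <= l)%N -> (l < l' <= j)%N -> reach_above l (f l, l) (f l', l')].
Proof.
move=> h1; elim=> [//|j IH] /andP [_ hj].
case: (posnP j) => [->|jpos].
  exists (fun _ => t); split=> // [l hl|l l' *]; last by lia.
  by have -> : l = 1%N by lia.
have [f [f1 fA fB]] := IH ltac:(lia).
have hj1 : (j <= j.+1 <= (r, k).2)%N by rewrite leqnSn.
have [H|[t' [h1' h2']]] := reach_above_last_visit (fA j ltac:(lia)) hj1.
  by have := reach_above_start H hj; rewrite /=; lia.
exists (fun l => if l == j.+1 then t' else f l); split.
- by rewrite ifF //; apply/eqP; lia.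
- by move=> l hl; case: eqP => [->//|hne]; apply: fA; lia.
move=> l l' hl hll'; rewrite ifF; last by apply/eqP; lia.
case: eqP => [->|hne]; last by apply: fB => //; lia.
case: (ltngtP l j) => [hlj|hjl|->//]; last by lia.
apply: reach_above_trans (fB l j hl _) _; first by rewrite hlj leqnn.
exact: reach_above_weaken (ltnW hlj) h1'.
Qed.

Lemma descending_ladder r k : reach_above 1 (r, k) q0 -> forall j, (j < k)%N ->
  exists g : nat -> Q, [/\ g k = r,
    forall l, (k - j <= l <= k)%N -> reach_above 1 (g l, l) q0 &
    forall l' l, (k - j <= l')%N -> (l' < l <= k)%N -> reach_above l' (g l, l) (g l', l')].
Proof.
move=> h0; elim=> [|j IH] hj.
  exists (fun _ => r); split=> // [l hl|l l' *]; last by lia.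
  by have -> : l = k by lia.
have [g [gk gA gB]] := IH (ltnW hj).
set c := (k - j)%N.
have hc : (0 <= c.-1 <= (g c, c).2)%N by rewrite leq_pred.
have [t [h1 h2]] := reach_above_first_visit (gA c ltac:(lia)) hc.
exists (fun l => if l == c.-1 then t else g l); split.
- by rewrite ifF //; apply/eqP; lia.
- by move=> l hl; case: eqP => [->//|hne]; apply: gA; lia.
move=> l' l hl' hll'; rewrite ifF; last by apply/eqP; lia.
case: eqP => [->|hne]; last by apply: gB => //; lia.
case: (ltngtP c l) => [hcl|hlc|<-]; last 2 first.
- by lia.
- by apply: reach_above_weaken h1; lia.
apply: reach_above_trans _ h1.
by apply: reach_above_weaken (gB c l (leqnn _) _); [exact: leq_pred | lia].
Qed.

Lemma pigeonhole_nat (f : nat -> Q) :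
  exists a b, [/\ (1 <= a)%N, (a < b <= #|Q|.+1)%N & f a = f b].
Proof.
apply: contrapT => H.
pose g (i : 'I_#|Q|.+1) := f i.+1.
suff /leq_card : injective g by rewrite card_ord ltnn.
move=> i j hij; apply: val_inj; apply: contrapT => hne; apply: H.
case: (ltngtP i j) => hlt; last by [].
- by exists i.+1, j.+1; split => //; rewrite ltnS hlt ltn_ord.
- by exists j.+1, i.+1; split => //; rewrite ltnS hlt ltn_ord.
Qed.

Lemma reach_above_pump_up s a b : (1 <= a)%N -> (a <= b)%N ->
  reach_above a (s, a) (s, b) ->
  forall n, reach_above a (s, a) (s, (a + n * (b - a))%N).
Proof.
move=> ha hab h; elim=> [|n IH]; first by rewrite mul0n addn0; exact: reach_above_refl.
apply: reach_above_trans IH _.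
have -> : (a + n.+1 * (b - a) = b + n * (b - a))%N by rewrite mulSn addnA subnKC.
exact: reach_above_weaken (leq_addr _ _) (reach_above_shift _ ha h).
Qed.

Lemma reach_above_pump_down t u v : (1 <= u)%N -> (u <= v)%N ->
  reach_above u (t, v) (t, u) ->
  forall n, reach_above u (t, (u + n * (v - u))%N) (t, u).
Proof.
move=> hu huv h; elim=> [|n IH]; first by rewrite mul0n addn0; exact: reach_above_refl.
apply: reach_above_trans _ IH.
have -> : (u + n.+1 * (v - u) = v + n * (v - u))%N by rewrite mulSn addnA subnKC.
exact: reach_above_weaken (leq_addr _ _) (reach_above_shift _ hu h).
Qed.

Lemma up_cycle r k : reach p1 (r, k) -> (#|Q| < k)%N ->
  exists s a b, [/\ (1 <= a)%N, (a < b <= k)%N, reach_above 0 p1 (s, a),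
    reach_above a (s, a) (s, b) & reach_above b (s, b) (r, k)].
Proof.
move=> hpost hk.
have [t [ht1 ht2]] : exists t, reach_above 0 p1 (t, 1%N) /\ reach_above 1 (t, 1%N) (r, k).
  have h01k : (0 <= 1 <= (r, k).2)%N by rewrite /=; lia.
  case: (reach_above_last_visit (reach_above0 hpost) h01k) => [H|//].
  by exists p; split => //; exact: reach_above_refl.
have hkk : (1 <= k <= k)%N by rewrite leqnn andbT; lia.
have [f [f1 fA fB]] := ascending_ladder ht2 hkk.
have [a [b [ha hab hfab]]] := pigeonhole_nat f.
exists (f a), a, b; split => //.
- by lia.
- case: (ltngtP 1 a) => [h1a|//|<-]; [|lia|by rewrite f1].
  apply: reach_above_trans ht1 (reach_above_weaken (leq0n 1) _).
  by rewrite -f1; apply: fB => //; lia.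
- by rewrite {2}hfab; apply: fB => //; lia.
- by rewrite hfab; apply: fA; lia.
Qed.

Lemma down_cycle r k : reach_above 1 (r, k) q0 -> (#|Q| < k)%N ->
  exists t u v, [/\ (1 <= u)%N, (u < v <= k)%N, reach_above 1 (r, k) (t, v),
    reach_above u (t, v) (t, u) & reach_above 1 (t, u) q0].
Proof.
move=> hpre hk.
have hk1 : (k.-1 < k)%N by lia.
have [g [gk gA gB]] := descending_ladder hpre hk1.
have [u [v [hu huv hguv]]] := pigeonhole_nat g.
exists (g u), u, v; split => //.
- by lia.
- rewrite hguv; case: (ltngtP v k) => [hvk|hkv|->]; [|lia|by rewrite gk; exact: reach_above_refl].
  rewrite -{1}gk; apply: (@reach_above_weaken v); first by lia.
  by apply: gB; lia.
- by rewrite {1}hguv; apply: gB; lia.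
- by apply: gA; lia.
Qed.

Lemma counter_le_card B :
  (forall y, reach p1 y -> reach y q0 -> (y.2 <= B)%N) ->
  forall r k, reach p1 (r, k) -> reach_above 1 (r, k) q0 -> (k <= #|Q|)%N.
Proof.
move=> hB r k hpost hpre; rewrite leqNgt; apply/negP => hk.
have [s [a [b [ha /andP[hab _] hps hup hsr]]]] := up_cycle hpost hk.
have [t [u [v [hu /andP[huv _] hrt hdown htq]]]] := down_cycle hpre hk.
pose d n := (n * (b - a) * (v - u))%N.
have reach_up n : reach p1 (s, b + d n)%N.
  apply: (@reach_aboveW 0); apply: reach_above_trans hps (reach_above_weaken (leq0n a) _).
  have := reach_above_pump_up ha (ltnW hab) hup (n * (v - u)).+1.
  by rewrite mulSn addnA subnKC 1?mulnAC // ltnW.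
have reach_down n : reach (s, b + d n)%N q0.
  apply: (@reach_aboveW 1).
  have mid : reach_above 1 (s, b) (t, v).
    by apply: reach_above_trans (reach_above_weaken _ hsr) hrt; lia.
  have := reach_above_shift (d n) (ltn0Sn 0) mid => /(reach_above_weaken (leq_addr _ _)) /=.
  move/reach_above_trans; apply; apply: reach_above_trans (reach_above_weaken hu _) htq.
  have := reach_above_pump_down hu (ltnW huv) hdown (n * (b - a)).+1.
  by rewrite mulSn addnA subnKC // ltnW.
have hd : (B.+1 <= d B.+1)%N by rewrite /d -mulnA leq_pmulr // muln_gt0 !subn_gt0 hab huv.
have := hB _ (reach_up B.+1) (reach_down B.+1); rewrite /=.
by move: (d B.+1) hd => D; lia.
Qed.

Lemma step_mean_ge0 f x : (forall y, 0 <= f y) -> 0 <= step_mean f x.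
Proof.
move=> hf; apply: sumr_ge0 => c _; apply: sumr_ge0 => r _.
exact: mulr_ge0 (Pp_ge0 _ _ _) (hf _).
Qed.

Lemma ler_step_mean f g x :
  (forall c r, 0 < Pp x.1 c r -> f (r, (x.2 + c - 1)%N) <= g (r, (x.2 + c - 1)%N)) ->
  step_mean f x <= step_mean g x.
Proof.
move=> hfg; apply: ler_sum => c _; apply: ler_sum => r _.
have [->|hP] := eqVneq (Pp x.1 c r) 0; first by rewrite !mul0r.
by apply: (ler_wpM2l (Pp_ge0 _ _ _)); apply: hfg; rewrite lt0r hP Pp_ge0.
Qed.

Lemma step_meanZ k f x : step_mean (fun y => k * f y) x = k * step_mean f x.
Proof.
rewrite /step_mean mulr_sumr; apply: eq_bigr => c _; rewrite mulr_sumr.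
by apply: eq_bigr => r _; rewrite mulrCA.
Qed.

Lemma step_meanD f g x : step_mean (fun y => f y + g y) x = step_mean f x + step_mean g x.
Proof.
rewrite /step_mean -big_split; apply: eq_bigr => c _; rewrite -big_split.
by apply: eq_bigr => r _; rewrite mulrDr.
Qed.

Lemma step_mean_sum M (F : 'I_M -> Q * nat -> R) x :
  step_mean (fun y => \sum_(m < M) F m y) x = \sum_(m < M) step_mean (F m) x.
Proof.
rewrite /step_mean [RHS]exchange_big; apply: eq_bigr => c _.
by rewrite [RHS]exchange_big; apply: eq_bigr => r _; rewrite mulr_sumr.
Qed.

Lemma step_mean_le1 f x : (forall y, f y <= 1) -> step_mean f x <= 1.
Proof.
move=> hf; rewrite -(Pp_sum1 x.1); apply: ler_sum => c _; apply: ler_sum => r _.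
by rewrite -[leRHS]mulr1; apply: (ler_wpM2l (Pp_ge0 _ _ _)).
Qed.

Lemma step_mean_ge_term f x c r : (forall y, 0 <= f y) ->
  Pp x.1 c r * f (r, (x.2 + c - 1)%N) <= step_mean f x.
Proof.
move=> hf; have hterm c' r' : 0 <= Pp x.1 c' r' * f (r', (x.2 + c' - 1)%N).
  exact: mulr_ge0 (Pp_ge0 _ _ _) (hf _).
apply: le_trans (_ : \sum_(r' : Q) Pp x.1 c r' * f (r', (x.2 + c - 1)%N) <= _).
  by rewrite (bigD1 r) //= lerDl sumr_ge0.
rewrite /step_mean (bigD1 c) //= lerDl.
by apply: sumr_ge0 => c' _; apply: sumr_ge0.
Qed.

Lemma pos_counter_neq_q0 x : (0 < x.2)%N -> (x == q0) = false.
Proof. by move=> hx; apply/eqP => ex; rewrite ex in hx. Qed.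

Lemma firsthit0 x : firsthit 0 x = (x == q0)%:R.
Proof. by []. Qed.

Lemma firsthitS_pos n x : (0 < x.2)%N -> firsthit n.+1 x = step_mean (firsthit n) x.
Proof. by move=> /= ->. Qed.

Lemma firsthit_ge0 n x : 0 <= firsthit n x.
Proof.
by elim: n x => [|n IH] x /=; [rewrite ler0n | case: ifP => // _; exact: step_mean_ge0].
Qed.

Lemma sum_firsthit_le1 M x : \sum_(m < M) firsthit m x <= 1.
Proof.
elim: M x => [|M IH] x; first by rewrite big_ord0 ler01.
rewrite big_ord_recl /=; case: (posnP x.2) => hx.
  by rewrite big1 // addr0; case: (x == q0).
rewrite pos_counter_neq_q0 // add0r -step_mean_sum.
by apply: step_mean_le1 => y; exact: IH.
Qed.

Lemma reach_above_of_firsthit_gt0 n x : 0 < firsthit n x -> reach_above 1 x q0.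
Proof.
elim: n x => [|n IH] x /=.
  by case: (eqVneq x q0) => [->|_]; [move=> _; exact: reach_above_refl | rewrite ltxx].
case: ifP => hx; last by rewrite ltxx.
move=> /sumr_gt0_exists [c [_ /sumr_gt0_exists [r [_ h]]]].
have hP : 0 < Pp x.1 c r.
  by rewrite lt0r Pp_ge0 andbT; apply: contraTneq h => ->; rewrite mul0r ltxx.
move: h; rewrite pmulr_rgt0 // => /IH.
exact: reach_above_step hx (trans_gt0_Pp hx hP).
Qed.

Lemma reach_snoc x y z : reach x y -> 0 < trans y z -> reach x z.
Proof.
move=> hxy hyz; apply: (@reach_aboveW 0); apply: reach_above_trans (reach_above0 hxy) _.
exact: reach_above_step (leq0n _) hyz (reach_above_refl _ _).
Qed.

Definition good x := [/\ reach p1 x, (0 < x.2)%N & reach_above 1 x q0].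

(* Probability that the first [k] steps from [x] stay in good configurations. *)
Fixpoint survival (k : nat) (x : Q * nat) : R :=
  if `[< good x >] then (if k is k'.+1 then step_mean (survival k') x else 1) else 0.

Lemma survival_not_good k x : ~ good x -> survival k x = 0.
Proof. by move=> hng; case: k => [|k] /=; rewrite asboolF. Qed.

Lemma survival0_good x : good x -> survival 0 x = 1.
Proof. by move=> hg /=; rewrite asboolT. Qed.

Lemma survivalS_good k x : good x -> survival k.+1 x = step_mean (survival k) x.
Proof. by move=> hg /=; rewrite asboolT. Qed.

Lemma survival_ge0 k x : 0 <= survival k x.
Proof.
by elim: k x => [|k IH] x /=; case: ifP => // _; exact: step_mean_ge0.
Qed.

Lemma firsthitS_eq0 n x : reach p1 x -> ~ good x -> firsthit n.+1 x = 0.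
Proof.
move=> hr hng; apply/eqP; rewrite eq_le firsthit_ge0 andbT leNgt; apply/negP => hpos.
apply: hng; split => //; last exact: reach_above_of_firsthit_gt0 hpos.
by move: hpos => /=; case: (posnP x.2) => // _; rewrite ltxx.
Qed.

(* Surviving [k] steps and hitting [q0] within [k] steps are disjoint events. *)
Lemma survival_firsthit_le1 k x : survival k x + \sum_(m < k.+1) firsthit m x <= 1.
Proof.
elim: k x => [|k IH] x; have [hg|hng] := asboolP (good x);
  try by rewrite survival_not_good // add0r sum_firsthit_le1.
- have [_ hx _] := hg.
  rewrite big_ord1 survival0_good // -[nat_of_ord ord0]/0%N firsthit0.
  by rewrite pos_counter_neq_q0 // addr0.
have [_ hx _] := hg.
rewrite survivalS_good // big_ord_recl -[nat_of_ord ord0]/0%N firsthit0.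
rewrite pos_counter_neq_q0 // add0r.
under eq_bigr => m _ do rewrite lift0 firsthitS_pos //.
by rewrite -step_mean_sum -step_meanD; apply: step_mean_le1 => y; exact: IH.
Qed.

Lemma survival_le1 k x : survival k x <= 1.
Proof.
apply: le_trans (survival_firsthit_le1 k x); rewrite lerDl.
by apply: sumr_ge0 => m _; exact: firsthit_ge0.
Qed.

(* The hitting time exceeds [k] only if the first [k] steps stay good. *)
Lemma firsthit_tail_le_survival k M x : reach p1 x ->
  \sum_(m < M) firsthit (m + k.+1) x <= survival k x.
Proof.
elim: k x => [|k IH] x hr; have [hg|hng] := asboolP (good x);
  try by rewrite big1 ?survival_ge0 // => m _; rewrite addnS firsthitS_eq0.
- rewrite survival0_good //; apply: le_trans (sum_firsthit_le1 M.+1 x).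
  rewrite [leRHS]big_ord_recl -[leLHS]add0r; apply: lerD; first exact: firsthit_ge0.
  by apply: ler_sum => m _; rewrite addn1; exact: lexx.
have [_ hx _] := hg.
under eq_bigr => m _ do rewrite addnS firsthitS_pos //.
rewrite survivalS_good // -step_mean_sum; apply: ler_step_mean => c r hP.
exact: IH (reach_snoc hr (trans_gt0_Pp hx hP)).
Qed.

Lemma survival_add_le L d : (forall x, survival L x <= (1 - d) * survival 0 x) ->
  forall k x, survival (L + k) x <= (1 - d) * survival k x.
Proof.
move=> hL; elim=> [|k IH] x; first by rewrite addn0.
have [hg|hng] := asboolP (good x); last by rewrite !survival_not_good ?mulr0.
rewrite addnS !survivalS_good // -step_meanZ.
by apply: ler_step_mean => c r _; exact: IH.
Qed.

Lemma sum_survival_le L d : (0 < L)%N -> 0 < d -> d <= 1 ->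
  (forall x, survival L x <= (1 - d) * survival 0 x) ->
  forall j x, \sum_(k < j * L) survival k x <= L%:R / d.
Proof.
move=> hL hd hd1 hcontr; elim=> [|j IH] x.
  by rewrite mul0n big_ord0 divr_ge0 ?ler0n // ltW.
rewrite mulSn big_split_ord /=.
have head : \sum_(k < L) survival k x <= L%:R.
  rewrite -[L in L%:R]card_ord -sumr_const.
  by apply: ler_sum => k _; exact: survival_le1.
have tail : \sum_(k < j * L) survival (L + k) x <= (1 - d) * (L%:R / d).
  apply: le_trans (_ : (1 - d) * \sum_(k < j * L) survival k x <= _).
    by rewrite mulr_sumr; apply: ler_sum => k _; exact: survival_add_le.
  by apply: ler_wpM2l; [rewrite subr_ge0 | exact: IH].
suff -> : L%:R / d = L%:R + (1 - d) * (L%:R / d) by exact: lerD.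
by field; exact: lt0r_neq0.
Qed.

Definition good_edge (x y : Q * nat) : bool :=
  `[< good x /\ exists c : 'I_3, y.2 = (x.2 + c - 1)%N /\ 0 < Pp x.1 c y.1 >].

Lemma good_path_to_q0 x : good x -> exists s, path good_edge x s /\ last x s = q0.
Proof.
case=> hr _ hp.
suff /(_ q0 hp erefl) : forall z, reach_above 1 x z -> z = q0 ->
  exists s, path good_edge x s /\ last x s = z by [].
move=> {hp} z hxz; elim: hxz hr => {x z} [x|x y z hx hxy hyz IH] hr ez; first by exists [::].
have [s [hs hl]] := IH (reach_snoc hr hxy) ez.
exists (y :: s); split => //=; rewrite hs andbT; apply/asboolP; split.
  by split => //; rewrite -ez; exact: reach_above_step hx hxy hyz.
by case: x hx hxy {hr IH} => s0 i /= hi /(trans_gt0_Pp_exists hi).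
Qed.

Lemma hitprob_ge_partial n : ((\sum_(m < n) firsthit m p1)%:E <= hitprob Pz Pp p q)%E.
Proof.
rewrite /hitprob; apply: le_trans (nneseries_lim_ge n _); last first.
  by move=> m _ _; rewrite lee_fin hitn_firsthit firsthit_ge0.
by rewrite sumEFin big_mkord lee_fin; apply: ler_sum => m _; rewrite hitn_firsthit.
Qed.

Lemma hitprob_le1 : (hitprob Pz Pp p q <= 1%:E)%E.
Proof.
apply: nneseries_le_bound => [n|k]; first by rewrite hitn_firsthit firsthit_ge0.
by under eq_bigr do rewrite hitn_firsthit; exact: sum_firsthit_le1.
Qed.

Lemma reach_above_of_hitprob_gt0 : (0 < hitprob Pz Pp p q)%E -> reach_above 1 p1 q0.
Proof.
move=> hpos; case: (pselect (exists n, 0 < firsthit n p1)) => [[n]|hnone].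
  exact: reach_above_of_firsthit_gt0.
move: hpos; rewrite /hitprob eseries0 ?ltxx // => n _ _; congr EFin.
apply/eqP; rewrite eq_le hitn_firsthit firsthit_ge0 andbT leNgt.
by apply/negP => hn; apply: hnone; exists n.
Qed.

Section Bounds.
Variables (xm : R) (B : nat).
Hypotheses (xm_gt0 : 0 < xm) (xm_le1 : xm <= 1).
Hypothesis xm_le_Pp : forall s c r, 0 < Pp s c r -> xm <= Pp s c r.
Hypothesis counter_bounded : forall y, reach p1 y -> reach y q0 -> (y.2 <= B)%N.
Hypothesis hitprob_gt0 : (0 < hitprob Pz Pp p q)%E.

Local Notation L := (#|Q| * #|Q|.+1)%N.

Lemma good_counter_le_card x : good x -> (x.2 <= #|Q|)%N.
Proof.
by case: x => r k [hr _ hp]; exact: counter_le_card counter_bounded r k hr hp.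
Qed.

Lemma good_path_counters s x : path good_edge x s -> last x s = q0 ->
  all (fun z => (z.2 <= #|Q|)%N) (x :: s).
Proof.
elim: s x => [|y s IH] x /=; first by move=> _ ->; rewrite andbT.
move=> /andP[/asboolP[hx _] hp] hl.
by rewrite good_counter_le_card //=; exact: IH.
Qed.

Lemma short_good_path x : good x ->
  exists s, [/\ path good_edge x s, last x s = q0 & (size s < L)%N].
Proof.
move=> hx; have [s [hs hl]] := good_path_to_q0 hx.
case: (shortenP hs) hl => s' hs' hu _ hl; exists s'; split => //.
exact: uniq_size_le_box hu (good_path_counters hs' hl).
Qed.

Lemma firsthit_path_ge s x : path good_edge x s -> last x s = q0 ->
  xm ^+ size s <= firsthit (size s) x.
Proof.
elim: s x => [|y s IH] x /=; first by move=> _ ->; rewrite eqxx expr0.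
move=> /andP[/asboolP[[_ hx _] [c [hyc hP]]] hp] hl.
rewrite hx exprS; apply: le_trans (@step_mean_ge_term (firsthit (size s)) x c y.1 (firsthit_ge0 _)).
rewrite -hyc -surjective_pairing.
by apply: ler_pM; [exact: ltW | exact: exprn_ge0 (ltW xm_gt0) | exact: xm_le_Pp | exact: IH].
Qed.

Lemma firsthit_mass_ge x : good x -> xm ^+ L <= \sum_(m < L) firsthit m x.
Proof.
move=> hx; have [s [hs hl hsz]] := short_good_path hx.
apply: le_trans (ler_wiXn2l (ltW xm_gt0) xm_le1 (ltnW hsz)) _.
apply: le_trans (firsthit_path_ge hs hl) _.
by rewrite (bigD1 (Ordinal hsz)) //= lerDl sumr_ge0 // => m _; exact: firsthit_ge0.
Qed.

Lemma survival_contract x : survival L x <= (1 - xm ^+ L) * survival 0 x.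
Proof.
have [hg|hng] := asboolP (good x); last by rewrite !survival_not_good ?mulr0.
rewrite survival0_good // mulr1 lerBrDr.
apply: le_trans (survival_firsthit_le1 L x); rewrite lerD2l.
apply: le_trans (firsthit_mass_ge hg) _.
by rewrite big_ord_recr /= lerDl firsthit_ge0.
Qed.

Lemma good_p1 : good p1.
Proof. by split => //; [exact: reach_refl | exact: reach_above_of_hitprob_gt0]. Qed.

Lemma expected_firsthit_le M : \sum_(m < M) m%:R * firsthit m p1 <= L%:R / xm ^+ L.
Proof.
have hL : (0 < L)%N by rewrite muln_gt0 andbT; apply/card_gt0P; exists p.
apply: le_trans (sum_mul_le_tails M (firsthit_ge0^~ p1)) _.
apply: le_trans (_ : \sum_(k < M) survival k p1 <= _).
  by apply: ler_sum => k _; exact: firsthit_tail_le_survival (reach_refl _ _ _).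
apply: le_trans (sum_survival_le hL _ _ survival_contract M p1).
- apply: (@sumr_ord_widen_le _ (survival^~ p1)); first by rewrite leq_pmulr.
  by move=> k; exact: survival_ge0.
- exact: exprn_gt0.
- exact: exprn_ile1 _ (ltW xm_gt0) xm_le1.
Qed.

Lemma condE_le : (condE Pz Pp p q <= (L%:R / xm ^+ L / xm ^+ L)%:E)%E.
Proof.
set d := xm ^+ L; have hd : 0 < d by exact: exprn_gt0.
have hmass : (d%:E <= hitprob Pz Pp p q)%E.
  by apply: le_trans (hitprob_ge_partial L); rewrite lee_fin; exact: firsthit_mass_ge good_p1.
set h := fine (hitprob Pz Pp p q).
have hh : hitprob Pz Pp p q = h%:E.
  rewrite /h fineK // ge0_fin_numE; last exact: le_trans (ltW _) hmass.
  exact: le_lt_trans hitprob_le1 (ltry _).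
have hdh : d <= h by rewrite -lee_fin -hh.
have hh0 : 0 < h := lt_le_trans hd hdh.
rewrite /condE -/h; apply: nneseries_le_bound => [n|M].
  by rewrite divr_ge0 ?mulr_ge0 ?ler0n ?hitn_firsthit ?firsthit_ge0 // ltW.
rewrite -mulr_suml; under eq_bigr do rewrite hitn_firsthit.
apply: ler_pM.
- by apply: sumr_ge0 => m _; rewrite mulr_ge0 ?ler0n ?firsthit_ge0.
- by rewrite invr_ge0 ltW.
- exact: expected_firsthit_le.
- by rewrite lef_pV2 ?posrE.
Qed.

End Bounds.

End Chain.

Lemma card_power_bound_le (R : realFieldType) (x : R) N : 0 < x -> x <= 1 -> (0 < N)%N ->
  (N * N.+1)%:R / x ^+ (N * N.+1) / x ^+ (N * N.+1) <=
  (15 * N ^ 3)%:R / x ^+ (4 * N ^ 3).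
Proof.
move=> x_gt0 x_le1 hN; rewrite -mulrA -invfM -exprD.
apply: ler_pM; first exact: ler0n.
- by rewrite invr_ge0 exprn_ge0 // ltW.
- by rewrite ler_nat; nia.
rewrite lef_pV2 ?posrE ?exprn_gt0 //.
by apply: (ler_wiXn2l (ltW x_gt0) x_le1); nia.
Qed.

Section Xmin.
Variables (R : realType) (Q : finType).
Variables (Pz : Q -> 'I_2 -> Q -> R) (Pp : Q -> 'I_3 -> Q -> R).

Lemma xmin_gt0 : 0 < xmin Pz Pp.
Proof. by rewrite lt_min; apply/andP; split; apply: lt_bigmin => //; exact: ltr01. Qed.

Lemma xmin_le1 : xmin Pz Pp <= 1.
Proof. by rewrite ge_min bigmin_le_id. Qed.

Lemma xmin_le_Pp s c r : 0 < Pp s c r -> xmin Pz Pp <= Pp s c r.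
Proof.
move=> hP; rewrite ge_min; apply/orP; right.
exact: (bigmin_le_cond 1 (j := (s, c, r)) (P := fun t => 0 < Pp t.1.1 t.1.2 t.2)).
Qed.

End Xmin.

Local Open Scope classical_set_scope.

Lemma reach_counter_bounded (R : realType) (Q : finType)
    (Pz : Q -> 'I_2 -> Q -> R) (Pp : Q -> 'I_3 -> Q -> R) (p q : Q) :
  finite_set (Pre Pz Pp [set (q, 0%N)] `&` Post Pz Pp [set (p, 1%N)]) ->
  exists B, forall y,
    reach Pz Pp (p, 1%N) y -> reach Pz Pp y (q, 0%N) -> (y.2 <= B)%N.
Proof.
move=> /finite_fsetP[X hX]; exists (\max_(y <- finmap.enum_fset X) y.2)%N => y hpost hpre.
have : (Pre Pz Pp [set (q, 0%N)] `&` Post Pz Pp [set (p, 1%N)]) y.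
  by split; [exists (q, 0%N) | exists (p, 1%N)].
by rewrite hX /= => hy; exact: (leq_bigmax_seq (F := fun y : Q * nat => y.2) y hy).
Qed.

Theorem mainTheorem7 (R : realType) (Q : finType)
  (Pz : Q -> 'I_2 -> Q -> R) (Pp : Q -> 'I_3 -> Q -> R) (p q : Q) :
  is_pOC Pz Pp ->
  (0 < hitprob Pz Pp p q)%E ->
  finite_set (Pre Pz Pp [set (q, 0%N)] `&` Post Pz Pp [set (p, 1%N)]) ->
  (condE Pz Pp p q <=
     ((15 * #|Q| ^ 3)%:R / xmin Pz Pp ^+ (4 * #|Q| ^ 3))%:E)%E.
Proof.
move=> [_ [Pp_ge0 [_ [Pp_sum1 _]]]] hpos hfin.
have [B hB] := reach_counter_bounded hfin.
have hQ : (0 < #|Q|)%N by apply/card_gt0P; exists p.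
apply: le_trans (condE_le Pp_ge0 Pp_sum1 (xmin_gt0 Pz Pp) (xmin_le1 Pz Pp)
                          (@xmin_le_Pp _ _ Pz Pp) hB hpos) _.
by rewrite lee_fin card_power_bound_le // ?xmin_gt0 ?xmin_le1.
Qed.
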